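(* For any quantum channel $\mathcal{N}$, any integer $d\ge1$ with $I_d$ the noiseless qudit channel (identity channel on a $d$-dimensional system), and any $k>0$, $$F^{PPTp}(\mathcal{N}\otimes I_d,kd)=F^{PPTp}(\mathcal{N},k).$$ Consequently $\kappa^{PPTp}(\mathcal{N}\otimes I_d)=d\,\kappa^{PPTp}(\mathcal{N})$.
   Context: For a quantum channel $\mathcal{N}:\mathcal{L}(A')\to\mathcal{L}(B)$ with $A\cong A'$ and Choi matrix $J_{AB}=\sum_{i,j}|i\rangle\langle j|_A\otimes\mathcal{N}(|i\rangle\langle j|_{A'})$, and $k>0$, $F^{PPTp}(\mathcal{N},k)$ is the optimal value of: maximize $\operatorname{tr}(J_{AB}W_{AB})$ subject to $0\le W_{AB}\le\rho_A\otimes\mathbb{1}_B$, $\operatorname{tr}\rho_A=1$, $-\frac1k\rho_A\otimes\mathbb{1}_B\le W_{AB}^{T_B}\le\frac1k\rho_A\otimes\mathbb{1}_B$, where $T_B$ is partial transpose on $B$. (For a product channel the input system is $AA_2$ and output $BB_2$, with the partial transpose taken on the whole output.) $\kappa^{PPTp}(\mathcal{N})=\max\{k\ge0:F^{PPTp}(\mathcal{N},k)=1\}$. *)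

From HB Require Import structures.
From mathcomp Require Import all_boot all_order all_algebra.
From mathcomp Require Import boolp classical_sets reals constructive_ereal ereal.
From mathcomp.real_closed Require Import complex mxtens.

Set Implicit Arguments.
Unset Strict Implicit.
Unset Printing Implicit Defensive.

Import Order.TTheory GRing.Theory Num.Theory.
Local Open Scope ring_scope.

Section QDefs.
Variable R : realType.
Local Notation C := R[i].

Definition adjmx {p q : nat} (A : 'M[C]_(p, q)) : 'M[C]_(q, p) :=
  (map_mx Num.conj A)^T.

Definition psd {p : nat} (A : 'M[C]_p) : Prop :=
  adjmx A = A /\ forall v : 'cV[C]_p, 0 <= (adjmx v *m A *m v) 0 0.

Definition lemx {p : nat} (A B : 'M[C]_p) : Prop := psd (B - A).

(* tensor product f (x) g of linear maps on matrix spaces, defined as the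
   linear extension on matrix units:  E_ij (x) E_kl |-> f(E_ij) (x) g(E_kl). *)
Definition tensmap {n1 m1 n2 m2 : nat}
  (f : 'M[C]_n1 -> 'M[C]_m1) (g : 'M[C]_n2 -> 'M[C]_m2)
  (X : 'M[C]_(n1 * n2)) : 'M[C]_(m1 * m2) :=
  \sum_(i < n1) \sum_(j < n1) \sum_(k < n2) \sum_(l < n2)
     X (mxtens_index (i, k)) (mxtens_index (j, l))
       *: (f (delta_mx i j) *t g (delta_mx k l)).

Definition is_channel {n m : nat} (N : 'M[C]_n -> 'M[C]_m) : Prop :=
  [/\ (forall (a : C) (X Y : 'M[C]_n), N (a *: X + Y) = a *: N X + N Y),
      (forall (p : nat) (X : 'M[C]_(p * n)),
          psd X -> psd (tensmap (fun Y : 'M[C]_p => Y) N X)) &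
      (forall X : 'M[C]_n, \tr (N X) = \tr X)].

Definition choi {n m : nat} (N : 'M[C]_n -> 'M[C]_m) : 'M[C]_(n * m) :=
  \sum_(i < n) \sum_(j < n) (delta_mx i j *t N (delta_mx i j)).

(* partial transpose on the second (output) factor B *)
Definition ptB {n m : nat} (X : 'M[C]_(n * m)) : 'M[C]_(n * m) :=
  \matrix_(r, s)
    X (mxtens_index ((mxtens_unindex r).1, (mxtens_unindex s).2))
      (mxtens_index ((mxtens_unindex s).1, (mxtens_unindex r).2)).

Definition pptp_feasible {n m : nat} (N : 'M[C]_n -> 'M[C]_m) (k : R)
  (W : 'M[C]_(n * m)) (rho : 'M[C]_n) : Prop :=
  let S := rho *t (1%:M : 'M[C]_m) in
  [/\ lemx 0 W, lemx W S, \tr rho = 1,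
      lemx (- ((k^-1)%:C%C *: S)) (ptB W) &
      lemx (ptB W) ((k^-1)%:C%C *: S)].

Definition Fpptp {n m : nat} (N : 'M[C]_n -> 'M[C]_m) (k : R) : R :=
  sup [set r : R | exists W rho,
         pptp_feasible N k W rho /\ \tr (choi N *m W) = r%:C%C].

(* kappa^{PPTp}(N) = max { k > 0 : F^{PPTp}(N,k) = 1 }, taken as a supremum
   in the extended reals *)
Definition kappa_pptp {n m : nat} (N : 'M[C]_n -> 'M[C]_m) : \bar R :=
  ereal_sup [set k%:E | k in [set k : R | 0 < k /\ Fpptp N k = 1]].

End QDefs.

Set Warnings "-notation-overridden,-ambiguous-paths,-notation-incompatible-prefix".
From HB Require Import structures.
From mathcomp Require Import all_boot all_order all_algebra.
From mathcomp Require Import boolp classical_sets reals constructive_ereal ereal.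
From mathcomp.real_closed Require Import complex mxtens.
From mathcomp Require Import ring.
Set Implicit Arguments.
Unset Strict Implicit.
Unset Printing Implicit Defensive.
Import Order.TTheory GRing.Theory Num.Theory.
Local Open Scope ring_scope.

(* Write J for the Choi matrix of N, E_ij : |a, b> |-> |a, i, b, j> and
   Phi = sum_i E_ii, so that Phi^* Phi = d and the Choi matrix of N (x) I_d is
   Phi J Phi^*.  A feasible (W, rho) for (N, k) gives the feasible
   (Phi W Phi^* / d^2, rho (x) 1/d) for (N (x) I_d, k d), and a feasible
   (W', rho') for the latter gives (Phi^* W' Phi, tr_2 rho'), both with the same
   objective value.  Partial transposition turns conjugation by Phi into the
   swap twirl X |-> sum_ij E_ij X E_ji^*, and -T <= X <= T implies
   -sum_ij E_ij T E_ij^* <= sum_ij E_ij X E_ji^* <= sum_ij E_ij T E_ij^*, which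
   carries the PPT constraints across. *)

Section Loewner.
Variable R : realType.
Local Notation C := R[i].

Lemma adjmxK p q (A : 'M[C]_(p, q)) : adjmx (adjmx A) = A.
Proof. by apply/matrixP=> i j; rewrite !mxE conjCK. Qed.

Lemma adjmxM p q r (A : 'M[C]_(p, q)) (B : 'M[C]_(q, r)) :
  adjmx (A *m B) = adjmx B *m adjmx A.
Proof. by rewrite /adjmx map_mxM trmx_mul. Qed.

Lemma adjmxD p q (A B : 'M[C]_(p, q)) : adjmx (A + B) = adjmx A + adjmx B.
Proof. by rewrite /adjmx map_mxD linearD. Qed.

Lemma adjmxN p q (A : 'M[C]_(p, q)) : adjmx (- A) = - adjmx A.
Proof. by rewrite /adjmx map_mxN linearN. Qed.

Lemma adjmxZ p q (c : C) (A : 'M[C]_(p, q)) : adjmx (c *: A) = c^* *: adjmx A.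
Proof. by apply/matrixP=> i j; rewrite !mxE rmorphM. Qed.

Lemma adjmx_sum p q I (r : seq I) (P : pred I) (F : I -> 'M[C]_(p, q)) :
  adjmx (\sum_(i <- r | P i) F i) = \sum_(i <- r | P i) adjmx (F i).
Proof. by rewrite /adjmx map_mx_sum linear_sum. Qed.

Lemma psd0 p : psd (0 : 'M[C]_p).
Proof. by split=> [|v]; rewrite ?mulmx0 ?mul0mx ?mxE // /adjmx map_mx0 trmx0. Qed.

Lemma psdD p (A B : 'M[C]_p) : psd A -> psd B -> psd (A + B).
Proof.
move=> [hA qA] [hB qB]; split=> [|v]; first by rewrite adjmxD hA hB.
by rewrite mulmxDr mulmxDl mxE addr_ge0.
Qed.

Lemma psd_sum p I (r : seq I) (P : pred I) (F : I -> 'M[C]_p) :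
  (forall i, P i -> psd (F i)) -> psd (\sum_(i <- r | P i) F i).
Proof.
by move=> h; elim/big_rec: _ => [|i x Pi]; [apply: psd0 | apply: psdD; apply: h].
Qed.

Lemma psdZ p (c : C) (A : 'M[C]_p) : 0 <= c -> psd A -> psd (c *: A).
Proof.
move=> c0 [hA qA]; split=> [|v]; first by rewrite adjmxZ hA conj_Creal ?ger0_real.
by rewrite -scalemxAr -scalemxAl mxE mulr_ge0.
Qed.

Lemma psd_congr p q (M : 'M[C]_(p, q)) (A : 'M[C]_q) :
  psd A -> psd (M *m A *m adjmx M).
Proof.
move=> [hA qA]; split=> [|v]; first by rewrite !adjmxM adjmxK hA mulmxA.
by have := qA (adjmx M *m v); rewrite adjmxM adjmxK !mulmxA.
Qed.

Lemma lemx0 p (A : 'M[C]_p) : lemx 0 A <-> psd A.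
Proof. by rewrite /lemx subr0. Qed.

Lemma lemx_trans p (A B D : 'M[C]_p) : lemx A B -> lemx B D -> lemx A D.
Proof. by move=> hAB hBD; have := psdD hBD hAB; rewrite addrA subrK. Qed.

Lemma lemxZ p (c : C) (A B : 'M[C]_p) :
  0 <= c -> lemx A B -> lemx (c *: A) (c *: B).
Proof. by move=> c0 hAB; rewrite /lemx -scalerBr; apply: psdZ. Qed.

Lemma lemx_congr p q (M : 'M[C]_(p, q)) (A B : 'M[C]_q) :
  lemx A B -> lemx (M *m A *m adjmx M) (M *m B *m adjmx M).
Proof. by move=> hAB; rewrite /lemx -mulmxBl -mulmxBr; apply: psd_congr. Qed.

End Loewner.

Section Expansions.
Variable R : realType.
Local Notation C := R[i].

(* Abstracting the products turns these into identities of the commutative ring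
   C, checked entrywise. *)
Lemma congr_sub_expand p q (A B : 'M[C]_(p, q)) (Y : 'M[C]_q) :
  (A - B) *m Y *m adjmx (A - B) =
  A *m Y *m adjmx A + B *m Y *m adjmx B - (A *m Y *m adjmx B + B *m Y *m adjmx A).
Proof.
rewrite adjmxD adjmxN !(mulmxDl, mulmxDr, mulNmx, mulmxN).
move: (A *m Y *m adjmx A) (A *m Y *m adjmx B).
move: (B *m Y *m adjmx A) (B *m Y *m adjmx B).
by move=> ? ? ? ?; apply/matrixP=> i j; rewrite !mxE; ring.
Qed.

Lemma polarization p q (A B : 'M[C]_(p, q)) (Y Z : 'M[C]_q) :
  (A + B) *m (Y - Z) *m adjmx (A + B) + (A - B) *m (Y + Z) *m adjmx (A - B) =
  (A *m Y *m adjmx A + B *m Y *m adjmx B -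
   (A *m Z *m adjmx B + B *m Z *m adjmx A)) *+ 2.
Proof.
rewrite !adjmxD adjmxN !(mulmxDl, mulmxDr, mulNmx, mulmxN).
move: (A *m Y *m adjmx A) (A *m Y *m adjmx B) (B *m Y *m adjmx A).
move: (B *m Y *m adjmx B) (A *m Z *m adjmx A) (A *m Z *m adjmx B).
move: (B *m Z *m adjmx A) (B *m Z *m adjmx B).
by move=> ? ? ? ? ? ? ? ?; apply/matrixP=> i j; rewrite !mxE; ring.
Qed.

End Expansions.

Lemma sum_transpose_add (V : nmodType) d (F : 'I_d -> 'I_d -> V) :
  \sum_i \sum_j (F i j + F j i) = (\sum_i \sum_j F i j) *+ 2.
Proof.
under eq_bigr do rewrite big_split /=.
by rewrite big_split /= [X in _ + X]exchange_big mulr2n.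
Qed.

Section SandwichMaps.
Variables (R : realType) (p q d : nat).
Local Notation C := R[i].
Variable E : 'I_d -> 'I_d -> 'M[C]_(p, q).

Definition sandwich (Y : 'M[C]_q) : 'M[C]_p :=
  \sum_i \sum_j E i j *m Y *m adjmx (E i j).

Definition swap_sandwich (Y : 'M[C]_q) : 'M[C]_p :=
  \sum_i \sum_j E i j *m Y *m adjmx (E j i).

Lemma sandwichZ c Y : sandwich (c *: Y) = c *: sandwich Y.
Proof.
rewrite /sandwich scaler_sumr; apply: eq_bigr => i _; rewrite scaler_sumr.
by apply: eq_bigr => j _; rewrite -scalemxAr -scalemxAl.
Qed.

Lemma swap_sandwichN Y : swap_sandwich (- Y) = - swap_sandwich Y.
Proof.
rewrite /swap_sandwich -sumrN; apply: eq_bigr => i _; rewrite -sumrN.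
by apply: eq_bigr => j _; rewrite mulmxN mulNmx.
Qed.

(* The polarizations (E_ij + E_ji) (T - X) (E_ij + E_ji)^* and
   (E_ij - E_ji) (T + X) (E_ij - E_ji)^*, summed over i and j, give
   4 (sandwich T - swap_sandwich X). *)
Lemma psd_sandwich_sub_swap T X :
  psd (T - X) -> psd (T + X) -> psd (sandwich T - swap_sandwich X).
Proof.
move=> hTmX hTpX.
pose P i j := (E i j + E j i) *m (T - X) *m adjmx (E i j + E j i) +
              (E i j - E j i) *m (T + X) *m adjmx (E i j - E j i).
have hP : psd (\sum_i \sum_j P i j).
  by do 2!(apply: psd_sum => ? _); apply: psdD; apply: psd_congr.
have eP : \sum_i \sum_j P i j = (sandwich T - swap_sandwich X) *+ 4.
  transitivity ((\sum_i \sum_j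
    ((E i j *m T *m adjmx (E i j) + E j i *m T *m adjmx (E j i)) -
     (E i j *m X *m adjmx (E j i) + E j i *m X *m adjmx (E i j)))) *+ 2).
    rewrite -sumrMnl; apply: eq_bigr => i _; rewrite -sumrMnl.
    by apply: eq_bigr => j _; apply: polarization.
  under eq_bigr do rewrite sumrB.
  rewrite sumrB (sum_transpose_add (fun i j => E i j *m T *m adjmx (E i j))).
  rewrite (sum_transpose_add (fun i j => E i j *m X *m adjmx (E j i))).
  by rewrite -mulrnBl -mulrnA.
have h4 : (0 : C) <= 4%:R^-1 by rewrite invr_ge0 ler0n.
rewrite -[_ - _]scale1r -(@mulVf _ 4%:R) ?pnatr_eq0 // -scalerA scaler_nat -eP.
exact: psdZ.
Qed.

Lemma swap_sandwich_bounded T X : lemx (- T) X -> lemx X T ->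
  lemx (- sandwich T) (swap_sandwich X) /\ lemx (swap_sandwich X) (sandwich T).
Proof.
move=> hXpT hTmX.
have hTpX : psd (T + X) by move: hXpT; rewrite /lemx opprK addrC.
split; last exact: (psd_sandwich_sub_swap hTmX hTpX).
rewrite /lemx opprK addrC -[X]opprK swap_sandwichN.
by apply: psd_sandwich_sub_swap; [rewrite opprK; exact: hTpX | exact: hTmX].
Qed.

Lemma lemx_diag_sandwich S :
  psd S -> lemx (\sum_i E i i *m S *m adjmx (E i i)) (sandwich S).
Proof.
move=> hS; rewrite /lemx /sandwich -sumrB; apply: psd_sum => i _.
rewrite (bigD1 i) //= addrAC subrr add0r.
by apply: psd_sum => j _; apply: psd_congr.
Qed.

End SandwichMaps.

(* From 0 <= sum_ij (G_i - G_j) S (G_i - G_j)^*. *)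
Lemma lemx_mean_congr (R : realType) p q d (G : 'I_d -> 'M[R[i]]_(p, q)) S :
  (0 < d)%N -> psd S ->
  lemx (d%:R^-1 *: ((\sum_i G i) *m S *m adjmx (\sum_i G i)))
       (\sum_i G i *m S *m adjmx (G i)).
Proof.
move=> d_gt0 hS.
have d0 : (d%:R : R[i]) != 0 by rewrite pnatr_eq0 -lt0n.
have eL : (\sum_i G i) *m S *m adjmx (\sum_i G i) =
          \sum_i \sum_j G i *m S *m adjmx (G j).
  rewrite adjmx_sum mulmx_sumr exchange_big.
  by apply: eq_bigr => j _; rewrite !mulmx_suml.
have hD : psd (\sum_i \sum_j (G i - G j) *m S *m adjmx (G i - G j)).
  by do 2!(apply: psd_sum => ? _); apply: psd_congr.
have eK : \sum_(i < d) \sum_(j < d) G i *m S *m adjmx (G i) =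
          (\sum_i G i *m S *m adjmx (G i)) *+ d.
  by rewrite -sumrMnl; apply: eq_bigr => i _; rewrite sumr_const card_ord.
move: hD; under eq_bigr do under eq_bigr do rewrite congr_sub_expand.
under eq_bigr do rewrite sumrB.
rewrite sumrB (sum_transpose_add (fun i j => G i *m S *m adjmx (G i))).
rewrite (sum_transpose_add (fun i j => G i *m S *m adjmx (G j))) eK -eL -mulrnBl.
move: (\sum_i _) ((\sum_i G i) *m _ *m _) => K L hD.
rewrite /lemx (_ : K - _ = (d%:R^-1 / 2%:R) *: ((K *+ d - L) *+ 2)).
  exact: psdZ.
rewrite -[(K *+ d - L) *+ 2]scaler_nat scalerA mulfVK ?pnatr_eq0 // scalerBr.
by rewrite -[K *+ d]scaler_nat scalerA mulVf // scale1r.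
Qed.

Lemma mxtens_index_inj p q : injective (@mxtens_index p q).
Proof. exact: can_inj (@mxtens_indexK p q). Qed.

Lemma eq_mxtens_index p q (x y : 'I_p * 'I_q) :
  (mxtens_index x == mxtens_index y) = (x == y).
Proof. exact: (inj_eq (@mxtens_index_inj p q)). Qed.

Lemma mxtens_index_ind p q (P : 'I_(p * q) -> Prop) :
  (forall a b, P (mxtens_index (a, b))) -> forall r, P r.
Proof. by move=> h r; case: (mxtens_indexP r). Qed.

Lemma ptBE (R : realType) p q (X : 'M[R[i]]_(p * q)) a b a' b' :
  ptB X (mxtens_index (a, b)) (mxtens_index (a', b')) =
  X (mxtens_index (a, b')) (mxtens_index (a', b)).
Proof. by rewrite mxE !mxtens_indexK. Qed.

Lemma ptBZ (R : realType) p q (c : R[i]) (X : 'M[R[i]]_(p * q)) :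
  ptB (c *: X) = c *: ptB X.
Proof. by apply/matrixP => r s; rewrite !mxE. Qed.

Lemma tensmxZl (K : comPzRingType) p q p' q' (c : K)
    (A : 'M[K]_(p, q)) (B : 'M[K]_(p', q')) :
  (c *: A) *t B = c *: (A *t B).
Proof. by apply/matrixP => r s; rewrite !mxE mulrA. Qed.

Lemma mxtrace_tens (K : comPzRingType) p q (A : 'M[K]_p) (B : 'M[K]_q) :
  \tr (A *t B) = \tr A * \tr B.
Proof. by rewrite /mxtrace mulr_sum; apply: eq_bigr => r _; rewrite mxE. Qed.

Section Sums.
Variable K : pzRingType.

Lemma sum_delta (T : finType) (x : T) (F : T -> K) :
  \sum_y (y == x)%:R * F y = F x.
Proof.
rewrite (bigD1 x) //= eqxx mul1r big1 ?addr0 // => y /negbTE ->.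
by rewrite mul0r.
Qed.

Lemma sum2_single (T U : finType) (F : T -> U -> K) x y :
  (forall p q, (p != x) || (q != y) -> F p q = 0) -> \sum_p \sum_q F p q = F x y.
Proof.
move=> h; rewrite (bigD1 x) //= [X in _ + X]big1 ?addr0; last first.
  by move=> p ne; apply: big1 => q _; apply: h; rewrite ne.
by rewrite (bigD1 y) //= big1 ?addr0 // => q ne; apply: h; rewrite ne orbT.
Qed.

Lemma sum_mxtens_index p q (F : 'I_(p * q) -> K) :
  \sum_r F r = \sum_a \sum_b F (mxtens_index (a, b)).
Proof.
rewrite pair_big /=; apply: reindex => /=.
exists (@mxtens_unindex p q) => [[a b] _|r _]; first by rewrite mxtens_indexK.
by rewrite mxtens_unindexK.
Qed.

End Sums.

Lemma tensmap_delta (R : realType) n1 m1 n2 m2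
    (f : 'M[R[i]]_n1 -> 'M[R[i]]_m1) (g : 'M[R[i]]_n2 -> 'M[R[i]]_m2) i k j l :
  tensmap f g (delta_mx (mxtens_index (i, k)) (mxtens_index (j, l))) =
  f (delta_mx i j) *t g (delta_mx k l).
Proof.
apply/matrixP => r s; rewrite summxE.
under eq_bigr do rewrite summxE; under eq_bigr do under eq_bigr do rewrite summxE.
under eq_bigr do under eq_bigr do under eq_bigr do rewrite summxE.
under eq_bigr do under eq_bigr do under eq_bigr do under eq_bigr do
  rewrite mxE [delta_mx _ _ _ _]mxE !eq_mxtens_index !xpair_eqE.
rewrite (sum2_single (x := i) (y := j)); last first.
  move=> p q /orP [] /negbTE ne; apply: big1 => k1 _; apply: big1 => l1 _;
  by rewrite ne ?andbF /= mul0r.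
rewrite (sum2_single (x := k) (y := l)); last first.
  by move=> p q /orP [] /negbTE ne; rewrite ne ?andbF /= mul0r.
by rewrite !eqxx mul1r.
Qed.

Lemma choiE (R : realType) n1 m1 (f : 'M[R[i]]_n1 -> 'M[R[i]]_m1) a b a' b' :
  choi f (mxtens_index (a, b)) (mxtens_index (a', b')) = f (delta_mx a a') b b'.
Proof.
rewrite summxE; under eq_bigr do rewrite summxE.
under eq_bigr do under eq_bigr do rewrite tensmxE mxE.
rewrite (sum2_single (x := a) (y := a')); first by rewrite !eqxx mul1r.
move=> p q /orP [] /negbTE ne.
  by rewrite [a == _]eq_sym ne mul0r.
by rewrite [a' == _]eq_sym ne andbF mul0r.
Qed.

Section QuditEmbedding.
Variables (R : realType) (n m d : nat).
Local Notation C := R[i].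
Local Notation id_d := (fun X : 'M[C]_d => X).

Definition idx4 (a : 'I_n) (i : 'I_d) (b : 'I_m) (j : 'I_d) :
    'I_((n * d) * (m * d)) :=
  mxtens_index (mxtens_index (a, i), mxtens_index (b, j)).

Lemma idx4_ind (P : 'I_((n * d) * (m * d)) -> Prop) :
  (forall a i b j, P (idx4 a i b j)) -> forall r, P r.
Proof.
move=> h; apply: mxtens_index_ind => p q.
by case: (mxtens_indexP p) => a i; case: (mxtens_indexP q) => b j; apply: h.
Qed.

(* [emb i j] maps |a, b> to |a, i, b, j>: each qudit index sits next to that of
   A or B, as in the input and output layout of [tensmap N id_d]. *)
Definition emb (i j : 'I_d) : 'M[C]_((n * d) * (m * d), n * m) :=
  \matrix_(r, c) (r == idx4 (mxtens_unindex c).1 i (mxtens_unindex c).2 j)%:R.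

Lemma embE i j r a b : emb i j r (mxtens_index (a, b)) = (r == idx4 a i b j)%:R.
Proof. by rewrite mxE mxtens_indexK. Qed.

Lemma emb_idx4 i j a i0 b j0 c :
  emb i j (idx4 a i0 b j0) c =
  (c == mxtens_index (a, b))%:R * ((i == i0) && (j == j0))%:R.
Proof.
move: c; apply: mxtens_index_ind => a' b'.
rewrite embE /idx4 !(eq_mxtens_index, xpair_eqE) -natrM mulnb andbACA.
by rewrite (eq_sym a') (eq_sym b') (eq_sym i) (eq_sym j).
Qed.

Lemma adj_embE i j c r : adjmx (emb i j) c r = emb i j r c.
Proof. by rewrite !mxE conjC_nat. Qed.

Lemma mul_emb_mx p i j (A : 'M[C]_(n * m, p)) a i0 b j0 c :
  (emb i j *m A) (idx4 a i0 b j0) c =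
  ((i == i0) && (j == j0))%:R * A (mxtens_index (a, b)) c.
Proof.
rewrite mxE (eq_bigr (fun c' =>
  (c' == mxtens_index (a, b))%:R * (((i == i0) && (j == j0))%:R * A c' c))).
  exact: sum_delta.
by move=> c' _; rewrite emb_idx4 mulrA.
Qed.

Lemma mul_mx_adj_emb p i j (A : 'M[C]_(p, n * m)) a i0 b j0 r :
  (A *m adjmx (emb i j)) r (idx4 a i0 b j0) =
  ((i == i0) && (j == j0))%:R * A r (mxtens_index (a, b)).
Proof.
rewrite mxE (eq_bigr (fun c' =>
  (c' == mxtens_index (a, b))%:R * (((i == i0) && (j == j0))%:R * A r c'))).
  exact: sum_delta.
by move=> c' _; rewrite adj_embE emb_idx4 mulrC -mulrA.
Qed.

Lemma mul_adj_emb_mx p i j (B : 'M[C]_((n * d) * (m * d), p)) a b c :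
  (adjmx (emb i j) *m B) (mxtens_index (a, b)) c = B (idx4 a i b j) c.
Proof.
rewrite mxE (eq_bigr (fun r => (r == idx4 a i b j)%:R * B r c)).
  exact: sum_delta.
by move=> r _; rewrite adj_embE embE.
Qed.

Lemma mul_mx_emb p i j (B : 'M[C]_(p, (n * d) * (m * d))) a b r :
  (B *m emb i j) r (mxtens_index (a, b)) = B r (idx4 a i b j).
Proof.
rewrite mxE (eq_bigr (fun r' => (r' == idx4 a i b j)%:R * B r r')).
  exact: sum_delta.
by move=> r' _; rewrite embE mulrC.
Qed.

Definition phi_emb : 'M[C]_((n * d) * (m * d), n * m) := \sum_i emb i i.

Lemma phi_conjE X a i b j a' i' b' j' :
  (phi_emb *m X *m adjmx phi_emb) (idx4 a i b j) (idx4 a' i' b' j') =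
  ((i == j) && (i' == j'))%:R * X (mxtens_index (a, b)) (mxtens_index (a', b')).
Proof.
rewrite adjmx_sum mulmx_sumr summxE.
under eq_bigr do rewrite mulmx_suml mulmx_suml summxE.
under eq_bigr do under eq_bigr do rewrite mul_mx_adj_emb mul_emb_mx.
rewrite (sum2_single (x := i') (y := i)); last first.
  by move=> q p /orP [] /negbTE ->; rewrite ?andbF /= mul0r ?mulr0.
by rewrite !eqxx /= mulrA -natrM mulnb andbC.
Qed.

Lemma sandwich_embE X a i b j a' i' b' j' :
  sandwich emb X (idx4 a i b j) (idx4 a' i' b' j') =
  ((i == i') && (j == j'))%:R * X (mxtens_index (a, b)) (mxtens_index (a', b')).
Proof.
rewrite summxE; under eq_bigr do rewrite summxE.
under eq_bigr do under eq_bigr do rewrite mul_mx_adj_emb mul_emb_mx.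
rewrite (sum2_single (x := i) (y := j)); last first.
  by move=> p q /orP [] /negbTE ->; rewrite ?andbF /= mul0r ?mulr0.
by rewrite !eqxx mul1r.
Qed.

Lemma swap_sandwich_embE X a i b j a' i' b' j' :
  swap_sandwich emb X (idx4 a i b j) (idx4 a' i' b' j') =
  ((j == i') && (i == j'))%:R * X (mxtens_index (a, b)) (mxtens_index (a', b')).
Proof.
rewrite summxE; under eq_bigr do rewrite summxE.
under eq_bigr do under eq_bigr do rewrite mul_mx_adj_emb mul_emb_mx.
rewrite (sum2_single (x := i) (y := j)); last first.
  by move=> p q /orP [] /negbTE ->; rewrite ?andbF /= mul0r ?mulr0.
by rewrite !eqxx mul1r.
Qed.

Lemma phi_compressE X a b a' b' :
  (adjmx phi_emb *m X *m phi_emb) (mxtens_index (a, b)) (mxtens_index (a', b')) =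
  \sum_p \sum_q X (idx4 a p b p) (idx4 a' q b' q).
Proof.
rewrite adjmx_sum mulmx_sumr summxE exchange_big /=; apply: eq_bigr => q _.
rewrite !mulmx_suml summxE; apply: eq_bigr => p _.
by rewrite mul_mx_emb mul_adj_emb_mx.
Qed.

Lemma sandwich_adj_embE X a b a' b' :
  sandwich (fun p q => adjmx (emb p q)) X
    (mxtens_index (a, b)) (mxtens_index (a', b')) =
  \sum_p \sum_q X (idx4 a p b q) (idx4 a' p b' q).
Proof.
rewrite summxE; apply: eq_bigr => p _; rewrite summxE; apply: eq_bigr => q _.
by rewrite adjmxK mul_mx_emb mul_adj_emb_mx.
Qed.

Lemma swap_sandwich_adj_embE X a b a' b' :
  swap_sandwich (fun p q => adjmx (emb p q)) X
    (mxtens_index (a, b)) (mxtens_index (a', b')) =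
  \sum_p \sum_q X (idx4 a p b q) (idx4 a' q b' p).
Proof.
rewrite summxE; apply: eq_bigr => p _; rewrite summxE; apply: eq_bigr => q _.
by rewrite adjmxK mul_mx_emb mul_adj_emb_mx.
Qed.

Lemma choi_tens_id (N : 'M[C]_n -> 'M[C]_m) :
  choi (tensmap N id_d) = phi_emb *m choi N *m adjmx phi_emb.
Proof.
apply/matrixP; apply: idx4_ind => a i b j; apply: idx4_ind => a' i' b' j'.
rewrite phi_conjE /idx4 !choiE tensmap_delta tensmxE [delta_mx i i' _ _]mxE.
by rewrite mulrC (eq_sym j) (eq_sym j').
Qed.

Lemma phi_emb_adj_mul : adjmx phi_emb *m phi_emb = d%:R%:M.
Proof.
apply/matrixP; apply: mxtens_index_ind => a b; apply: mxtens_index_ind => a' b'.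
rewrite -[adjmx phi_emb]mulmx1 phi_compressE mxE eq_mxtens_index xpair_eqE.
rewrite (eq_bigr (fun _ => ((a == a') && (b == b'))%:R)) ?sumr_const ?card_ord.
  by case: (_ && _); rewrite ?mul0rn ?mulr0n.
move=> p _; rewrite (bigD1 p) //= big1 => [|q];
  rewrite mxE /idx4 !(eq_mxtens_index, xpair_eqE).
  by rewrite !eqxx !andbT addr0.
by rewrite eq_sym => /negbTE ->; rewrite !andbF.
Qed.

Lemma tens_id_sandwich (rho : 'M[C]_n) :
  (rho *t (1%:M : 'M[C]_d)) *t (1%:M : 'M[C]_(m * d)) =
  sandwich emb (rho *t (1%:M : 'M[C]_m)).
Proof.
apply/matrixP; apply: idx4_ind => a i b j; apply: idx4_ind => a' i' b' j'.
rewrite sandwich_embE /idx4 !tensmxE !mxE !eq_mxtens_index !xpair_eqE.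
by case: (i == i'); case: (j == j'); case: (b == b');
  rewrite ?mulr1 ?mulr0 ?mul1r ?mul0r.
Qed.

Lemma ptB_phi_conj (W : 'M[C]_(n * m)) :
  ptB (phi_emb *m W *m adjmx phi_emb) = swap_sandwich emb (ptB W).
Proof.
apply/matrixP; apply: idx4_ind => a i b j; apply: idx4_ind => a' i' b' j'.
rewrite swap_sandwich_embE /idx4 !ptBE (phi_conjE W a i b' j' a' i' b j).
by rewrite andbC (eq_sym j).
Qed.

Definition ptrace2 (rho' : 'M[C]_(n * d)) : 'M[C]_n :=
  \matrix_(a, a') \sum_i rho' (mxtens_index (a, i)) (mxtens_index (a', i)).

Lemma mxtrace_ptrace2 (rho' : 'M[C]_(n * d)) : \tr (ptrace2 rho') = \tr rho'.
Proof.
by rewrite [RHS]sum_mxtens_index; apply: eq_bigr => a _; rewrite mxE.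
Qed.

Lemma phi_compress_tens_id (rho' : 'M[C]_(n * d)) :
  adjmx phi_emb *m (rho' *t (1%:M : 'M[C]_(m * d))) *m phi_emb =
  ptrace2 rho' *t (1%:M : 'M[C]_m).
Proof.
apply/matrixP; apply: mxtens_index_ind => a b; apply: mxtens_index_ind => a' b'.
rewrite phi_compressE tensmxE !mxE mulr_suml; apply: eq_bigr => p _.
rewrite (bigD1 p) //= big1 => [|q];
  rewrite /idx4 tensmxE mxE eq_mxtens_index xpair_eqE.
  by rewrite eqxx andbT addr0.
by rewrite eq_sym => /negbTE ->; rewrite andbF mulr0.
Qed.

Lemma ptB_phi_compress (W' : 'M[C]_((n * d) * (m * d))) :
  ptB (adjmx phi_emb *m W' *m phi_emb) =
  swap_sandwich (fun p q => adjmx (emb p q)) (ptB W').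
Proof.
apply/matrixP; apply: mxtens_index_ind => a b; apply: mxtens_index_ind => a' b'.
rewrite swap_sandwich_adj_embE ptBE phi_compressE.
by apply: eq_bigr => p _; apply: eq_bigr => q _; rewrite ptBE.
Qed.

Lemma sandwich_adj_emb_tens_id (rho' : 'M[C]_(n * d)) :
  sandwich (fun p q => adjmx (emb p q)) (rho' *t (1%:M : 'M[C]_(m * d))) =
  d%:R *: (ptrace2 rho' *t (1%:M : 'M[C]_m)).
Proof.
apply/matrixP; apply: mxtens_index_ind => a b; apply: mxtens_index_ind => a' b'.
rewrite sandwich_adj_embE [RHS]mxE tensmxE !mxE mulr_suml mulr_sumr.
apply: eq_bigr => p _; rewrite /idx4.
under eq_bigr do rewrite tensmxE mxE eq_mxtens_index xpair_eqE eqxx andbT.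
by rewrite sumr_const card_ord mulr_natl.
Qed.

End QuditEmbedding.

Section Transport.
Variables (R : realType) (n m d : nat) (N : 'M[R[i]]_n -> 'M[R[i]]_m) (k : R).
Hypothesis d_gt0 : (0 < d)%N.
Local Notation C := R[i].
Local Notation id_d := (fun X : 'M[C]_d => X).
Local Notation Phi := (phi_emb R n m d).
Local Notation E := (@emb R n m d).
Local Notation c := (d%:R^-1 : C).

Let c_ge0 : 0 <= c. Proof. by rewrite invr_ge0 ler0n. Qed.

Let d_neq0 : (d%:R : C) != 0. Proof. by rewrite pnatr_eq0 -lt0n. Qed.

Let inv_kd : ((k * d%:R)^-1)%:C%C = (k^-1)%:C%C * c.
Proof. by rewrite invfM rmorphM !fmorphV rmorph_nat. Qed.

Lemma pptp_feasible_tens_id W rho : pptp_feasible N k W rho ->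
  pptp_feasible (tensmap N id_d) (k * d%:R)
    ((c * c) *: (Phi *m W *m adjmx Phi)) (c *: (rho *t (1%:M : 'M[C]_d))).
Proof.
move=> [W_ge0 W_le tr_rho ptB_ge ptB_le].
set S := rho *t (1%:M : 'M[C]_m).
have S_ge0 : psd S by apply/lemx0; apply: lemx_trans W_le.
have eS : (c *: (rho *t (1%:M : 'M[C]_d))) *t (1%:M : 'M[C]_(m * d)) =
          c *: sandwich E S by rewrite tensmxZl tens_id_sandwich.
have cc_ge0 : 0 <= c * c by rewrite mulr_ge0.
have [swap_ge swap_le] := swap_sandwich_bounded E ptB_ge ptB_le.
have eT : ((k * d%:R)^-1)%:C%C *: (c *: sandwich E S) =
          (c * c) *: sandwich E ((k^-1)%:C%C *: S).
  by rewrite sandwichZ !scalerA inv_kd; congr (_ *: _); ring.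
rewrite /pptp_feasible eS ptBZ ptB_phi_conj eT; split.
- by apply/lemx0; apply: psdZ cc_ge0 _; apply/psd_congr/lemx0.
- apply: lemx_trans (lemxZ cc_ge0 (lemx_congr Phi W_le)) _.
  rewrite -scalerA; apply: (lemxZ c_ge0).
  apply: lemx_trans (lemx_diag_sandwich E S_ge0).
  exact: lemx_mean_congr.
- by rewrite mxtraceZ mxtrace_tens mxtrace1 tr_rho mul1r mulVf.
- by rewrite -scalerN; apply: (lemxZ cc_ge0 swap_ge).
- exact: (lemxZ cc_ge0 swap_le).
Qed.

Lemma objective_tens_id W :
  \tr (choi (tensmap N id_d) *m ((c * c) *: (Phi *m W *m adjmx Phi))) =
  \tr (choi N *m W).
Proof.
rewrite choi_tens_id -scalemxAr mxtraceZ !mulmxA.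
rewrite -[Phi *m choi N *m adjmx Phi *m Phi]mulmxA phi_emb_adj_mul.
rewrite mul_mx_scalar -!scalemxAl mxtraceZ mxtrace_mulC !mulmxA phi_emb_adj_mul.
rewrite mul_scalar_mx -!scalemxAl mxtraceZ !mulrA -(mulrA c) mulVf // mulr1.
by rewrite mulVf ?mul1r.
Qed.

Lemma pptp_feasible_of_tens_id W' rho' :
  pptp_feasible (tensmap N id_d) (k * d%:R) W' rho' ->
  pptp_feasible N k (adjmx Phi *m W' *m Phi) (ptrace2 rho').
Proof.
move=> [W'_ge0 W'_le tr_rho' ptB_ge ptB_le].
set G := fun p q => adjmx (E p q).
set S' := rho' *t (1%:M : 'M[C]_(m * d)).
have eS : ptrace2 rho' *t (1%:M : 'M[C]_m) = c *: sandwich G S'.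
  by rewrite sandwich_adj_emb_tens_id scalerA mulVf // scale1r.
rewrite inv_kd -scalerA in ptB_ge ptB_le.
have [swap_ge swap_le] := swap_sandwich_bounded G ptB_ge ptB_le.
rewrite /pptp_feasible mxtrace_ptrace2 ptB_phi_compress; split.
- apply/lemx0; move/lemx0: W'_ge0 => /(psd_congr (adjmx Phi)).
  by rewrite adjmxK.
- rewrite -phi_compress_tens_id.
  by have := lemx_congr (adjmx Phi) W'_le; rewrite adjmxK.
- exact: tr_rho'.
- by rewrite eS -!sandwichZ; exact: swap_ge.
- by rewrite eS -!sandwichZ; exact: swap_le.
Qed.

Lemma objective_of_tens_id W' :
  \tr (choi N *m (adjmx Phi *m W' *m Phi)) = \tr (choi (tensmap N id_d) *m W').
Proof. by rewrite choi_tens_id !mulmxA mxtrace_mulC !mulmxA. Qed.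

Lemma Fpptp_tens_id : Fpptp (tensmap N id_d) (k * d%:R) = Fpptp N k.
Proof.
congr sup; apply/seteqP; split => r [W [rho [feas obj]]].
- exists (adjmx Phi *m W *m Phi), (ptrace2 rho).
  by split; [apply: pptp_feasible_of_tens_id | rewrite objective_of_tens_id].
- exists ((c * c) *: (Phi *m W *m adjmx Phi)), (c *: (rho *t 1%:M)).
  by split; [apply: pptp_feasible_tens_id | rewrite objective_tens_id].
Qed.

End Transport.

Lemma kappa_pptp_scale (R : realType) n m n' m' (N : 'M[R[i]]_n -> 'M[R[i]]_m)
    (N' : 'M[R[i]]_n' -> 'M[R[i]]_m') (s : R) :
  0 < s -> (forall k, 0 < k -> Fpptp N' (k * s) = Fpptp N k) ->
  kappa_pptp N' = (s%:E * kappa_pptp N)%E.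
Proof.
move=> s_gt0 hF; have s_neq0 : s != 0 by rewrite gt_eqF.
rewrite /kappa_pptp -ereal_sup_pZl //; congr ereal_sup; apply/seteqP; split.
- move=> _ [k' [k'_gt0 Fk'] <-]; have ks_gt0 : 0 < k' / s by rewrite divr_gt0.
  exists (k' / s)%:E; last by rewrite -EFinM mulrC divfK.
  by exists (k' / s); [split; [exact: ks_gt0 | rewrite -hF ?divfK] | ].
- move=> _ [_ [k [k_gt0 Fk] <-] <-]; exists (k * s); last by rewrite EFinM muleC.
  by split; [rewrite mulr_gt0 | rewrite hF].
Qed.

Theorem proposition1 (R : realType) (n m d : nat)
  (N : 'M[R[i]]_n -> 'M[R[i]]_m) :
  is_channel N -> (0 < d)%N ->
  (forall k : R, 0 < k ->
     Fpptp (tensmap N (fun X : 'M[R[i]]_d => X)) (k * d%:R) = Fpptp N k) /\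
  kappa_pptp (tensmap N (fun X : 'M[R[i]]_d => X)) = ((d%:R)%:E * kappa_pptp N)%E.
Proof.
move=> _ d_gt0; split=> [k _|]; first exact: Fpptp_tens_id.
apply: kappa_pptp_scale => [|k _]; first by rewrite ltr0n.
exact: Fpptp_tens_id.
Qed.
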